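(* Let $\mathcal{P}\subset\mathbb{R}^3$ be a pointsymmetric convex polyhedron with radius $1$ and let $S\in\mathcal{P}$. Let $\bar\theta_1,\bar\varphi_1,\bar\theta_2,\bar\varphi_2,\bar\alpha\in\mathbb{R}$, $\varepsilon>0$, and let $w\in\mathbb{R}^2$ be a unit vector. Write $\overline{M_1}=M(\bar\theta_1,\bar\varphi_1)$, $\overline{M_2}=M(\bar\theta_2,\bar\varphi_2)$, $\overline{M_k}^\theta=M^\theta(\bar\theta_k,\bar\varphi_k)$, $\overline{M_k}^\varphi=M^\varphi(\bar\theta_k,\bar\varphi_k)$ for $k=1,2$, and set \[ G=\langle R(\bar\alpha)\overline{M_1}S,w\rangle-\varepsilon\big(|\langle R'(\bar\alpha)\overline{M_1}S,w\rangle|+|\langle R(\bar\alpha)\overline{M_1}^\theta S,w\rangle|+|\langle R(\bar\alpha)\overline{M_1}^\varphi S,w\rangle|\big)-\tfrac{9}{2}\varepsilon^2, \] \[ H_P=\langle \overline{M_2}P,w\rangle+\varepsilon\big(|\langle\overline{M_2}^\theta P,w\rangle|+|\langle\overline{M_2}^\varphi P,w\rangle|\big)+2\varepsilon^2\quad (P\in\mathcal{P}). \] If $G>\max_{P\in\mathcal{P}}H_P$, then there is no $(\theta_1,\varphi_1,\theta_2,\varphi_2,\alpha)$ with $|\theta_k-\bar\theta_k|,|\varphi_k-\bar\varphi_k|,|\alpha-\bar\alpha|\le\varepsilon$ ($k=1,2$) such that $R(\alpha)M(\theta_1,\varphi_1)\mathcal{P}\subset\operatorname{int}\operatorname{conv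}(M(\theta_2,\varphi_2)\mathcal{P})$.
   Context: $R(\alpha)=\begin{pmatrix}\cos\alpha&-\sin\alpha\\ \sin\alpha&\cos\alpha\end{pmatrix}$, $R'(\alpha)=\frac{d}{d\alpha}R(\alpha)$; $M(\theta,\varphi)=\begin{pmatrix}-\sin\theta&\cos\theta&0\\ -\cos\theta\cos\varphi&-\sin\theta\cos\varphi&\sin\varphi\end{pmatrix}$, $M^\theta=\partial_\theta M$, $M^\varphi=\partial_\varphi M$. A polyhedron is a finite non-degenerate set of points of $\mathbb{R}^3$ in convex position; pointsymmetric means $\mathcal{P}=-\mathcal{P}$; radius $1$ means $\|P\|\le1$ for all $P\in\mathcal{P}$ with equality for some $P$. Matrices act on point sets elementwise. *)

From Stdlib Require Import Reals Lra List.
Import ListNotations.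
Open Scope R_scope.

Definition pt3 : Type := (R * R * R)%type.
Definition pt2 : Type := (R * R)%type.

Definition px (P : pt3) : R := fst (fst P).
Definition py (P : pt3) : R := snd (fst P).
Definition pz (P : pt3) : R := snd P.

Definition opp3 (P : pt3) : pt3 := (- px P, - py P, - pz P).
Definition sub3 (P Q : pt3) : pt3 := (px P - px Q, py P - py Q, pz P - pz Q).
Definition norm3 (P : pt3) : R := sqrt (px P ^ 2 + py P ^ 2 + pz P ^ 2).
Definition det3 (A B C : pt3) : R :=
  px A * (py B * pz C - pz B * py C)
  - py A * (px B * pz C - pz B * px C)
  + pz A * (px B * py C - py B * px C).

Definition inner2 (u v : pt2) : R := fst u * fst v + snd u * snd v.
Definition norm2 (u : pt2) : R := sqrt (fst u ^ 2 + snd u ^ 2).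
Definition dist2 (u v : pt2) : R := norm2 (fst u - fst v, snd u - snd v).

Definition Rot (a : R) (v : pt2) : pt2 :=
  (cos a * fst v - sin a * snd v, sin a * fst v + cos a * snd v).
Definition Rot' (a : R) (v : pt2) : pt2 :=
  (- sin a * fst v - cos a * snd v, cos a * fst v - sin a * snd v).

Definition Mmat (t f : R) (P : pt3) : pt2 :=
  (- sin t * px P + cos t * py P + 0 * pz P,
   - cos t * cos f * px P - sin t * cos f * py P + sin f * pz P).
Definition Mtheta (t f : R) (P : pt3) : pt2 :=
  (- cos t * px P - sin t * py P + 0 * pz P,
   sin t * cos f * px P - cos t * cos f * py P + 0 * pz P).
Definition Mphi (t f : R) (P : pt3) : pt2 :=
  (0 * px P + 0 * py P + 0 * pz P,
   cos t * sin f * px P + sin t * sin f * py P + cos f * pz P).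

Fixpoint wsum3 (w : list R) (L : list pt3) : pt3 :=
  match w, L with
  | a :: w', P :: L' =>
      let S := wsum3 w' L' in
      (a * px P + px S, a * py P + py S, a * pz P + pz S)
  | _, _ => (0, 0, 0)
  end.
Fixpoint wsum2 (w : list R) (L : list pt2) : pt2 :=
  match w, L with
  | a :: w', P :: L' =>
      let S := wsum2 w' L' in (a * fst P + fst S, a * snd P + snd S)
  | _, _ => (0, 0)
  end.

Definition in_conv3 (L : list pt3) (x : pt3) : Prop :=
  exists w : list R, length w = length L /\ Forall (fun a => 0 <= a) w /\
    fold_right Rplus 0 w = 1 /\ x = wsum3 w L.
Definition in_conv2 (L : list pt2) (x : pt2) : Prop :=
  exists w : list R, length w = length L /\ Forall (fun a => 0 <= a) w /\
    fold_right Rplus 0 w = 1 /\ x = wsum2 w L.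

Definition in_int_conv2 (L : list pt2) (x : pt2) : Prop :=
  exists r, 0 < r /\ forall y, dist2 x y < r -> in_conv2 L y.

(* a polyhedron: a finite (duplicate-free list), non-degenerate (not contained
   in a plane) set of points in convex position (no point in the convex hull
   of the others) *)
Definition polyhedron (L : list pt3) : Prop :=
  NoDup L /\
  (exists P0 P1 P2 P3, In P0 L /\ In P1 L /\ In P2 L /\ In P3 L /\
     det3 (sub3 P1 P0) (sub3 P2 P0) (sub3 P3 P0) <> 0) /\
  (forall i, (i < length L)%nat ->
     ~ in_conv3 (firstn i L ++ skipn (S i) L) (nth i L (0, 0, 0))).

Definition pointsymmetric (L : list pt3) : Prop :=
  forall P, In P L <-> In (opp3 P) L.

Definition radius_one (L : list pt3) : Prop :=
  (forall P, In P L -> norm3 P <= 1) /\ (exists P, In P L /\ norm3 P = 1).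

(* In each single angle, <R(a) M(t,f) P, w> is a sinusoid of amplitude at most
   |P| |w| <= 1, so its first derivatives are 1-Lipschitz and its second derivatives
   are bounded by 1.  Second-order Taylor bounds on the eps-box give
   <R(a) M(t1,f1) S, w> >= G (three remainders eps^2/2 and three mixed terms eps^2)
   and <M(t2,f2) P, w> <= H_P < G (two remainders and one mixed term).  Every point of
   conv(M(t2,f2) P) then has w-projection < G, so R(a) M(t1,f1) S is not even in that
   hull. *)

From Stdlib Require Import Reals Lra Lia.
From Coquelicot Require Import Coquelicot.
From Stdlib Require Import List.
Open Scope R_scope.

Lemma sin2_cos2_pow x : sin x ^ 2 + cos x ^ 2 = 1.
Proof. pose proof (sin2_cos2 x) as Hx. unfold Rsqr in Hx. lra. Qed.

Lemma Rmult_between x y a b : Rabs x <= a -> Rabs y <= b -> - (a * b) <= x * y <= a * b.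
Proof.
  intros Hx Hy. apply Rabs_le_between. rewrite Rabs_mult.
  apply Rmult_le_compat; auto using Rabs_pos.
Qed.

Lemma pow2_le_of_Rabs_le x e : Rabs x <= e -> x ^ 2 <= e ^ 2.
Proof. intro Hx. rewrite <- pow2_abs. pose proof (Rabs_pos x). nra. Qed.

Lemma Rabs_cos_sin_comb_le_1 A B x : A ^ 2 + B ^ 2 <= 1 -> Rabs (A * cos x + B * sin x) <= 1.
Proof.
  intro HAB.
  assert (Hsq : (A * cos x + B * sin x) ^ 2 <= 1).
  { assert (E : (A ^ 2 + B ^ 2) * (sin x ^ 2 + cos x ^ 2) - (A * cos x + B * sin x) ^ 2
                = (A * sin x - B * cos x) ^ 2) by ring.
    pose proof (pow2_ge_0 (A * sin x - B * cos x)). rewrite sin2_cos2_pow in E. lra. }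
  rewrite <- pow2_abs in Hsq. pose proof (Rabs_pos (A * cos x + B * sin x)). nra.
Qed.

Lemma lipschitz_of_derive_bound (g g' : R -> R) K :
  (forall x, derivable_pt_lim g x (g' x)) -> (forall x, Rabs (g' x) <= K) ->
  forall s t, Rabs (g t - g s) <= K * Rabs (t - s).
Proof.
  intros Hg HK s t. destruct (MVT_abs g g' s t (fun c _ => Hg c)) as [c [-> _]].
  apply Rmult_le_compat_r; auto using Rabs_pos.
Qed.

Lemma rolle_strict (f f' : R -> R) a b :
  (forall x, derivable_pt_lim f x (f' x)) -> f a = f b -> a <> b ->
  exists c, c <> a /\ f' c = 0.
Proof.
  intros Hf Hab Hne.
  destruct (Rlt_or_le a b) as [Hlt | Hle].
  - destruct (MVT_cor2 f f' a b Hlt (fun c _ => Hf c)) as [c [Hc Hac]].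
    exists c. split; [lra |]. apply (Rmult_eq_reg_r (b - a)); lra.
  - destruct (MVT_cor2 f f' b a ltac:(lra) (fun c _ => Hf c)) as [c [Hc Hac]].
    exists c. split; [lra |]. apply (Rmult_eq_reg_r (a - b)); lra.
Qed.

Lemma taylor1_remainder_le (g g' g'' : R -> R) K :
  (forall x, derivable_pt_lim g x (g' x)) -> (forall x, derivable_pt_lim g' x (g'' x)) ->
  (forall x, Rabs (g'' x) <= K) ->
  forall s t, Rabs (g t - g s - (t - s) * g' s) <= K * (t - s) ^ 2 / 2.
Proof.
  intros Hg Hg' HK s t.
  destruct (Req_dec t s) as [-> | Hts].
  { replace (g s - g s - (s - s) * g' s) with 0 by ring. rewrite Rabs_R0. lra. }
  assert (Hpos : 0 < (t - s) ^ 2) by (apply pow2_gt_0; lra).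
  (* [D] makes [phi] vanish at [s] and [t]; Rolle then gives [g' c - g' s = 2 D (c - s)] *)
  set (D := (g t - g s - (t - s) * g' s) / (t - s) ^ 2).
  set (phi := fun x => g x - g s - (x - s) * g' s - D * (x - s) ^ 2).
  assert (Hgd : forall x, is_derive g x (g' x)) by (intro; apply is_derive_Reals, Hg).
  assert (Hphi : forall x, derivable_pt_lim phi x (g' x - g' s - 2 * D * (x - s))).
  { intro x. apply is_derive_Reals. unfold phi. auto_derive.
    - exists (g' x). apply Hgd.
    - erewrite is_derive_unique by apply Hgd. ring. }
  destruct (rolle_strict phi _ s t Hphi) as [c [Hcs Hc]].
  { unfold phi, D. field. lra. }
  { lra. }
  assert (Hlip := lipschitz_of_derive_bound g' g'' K Hg' HK s c).
  replace (g' c - g' s) with (2 * D * (c - s)) in Hlip by lra.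
  rewrite !Rabs_mult, (Rabs_right 2) in Hlip by lra.
  assert (HD : 2 * Rabs D <= K).
  { pose proof (Rabs_pos_lt (c - s) ltac:(lra)). nra. }
  replace (g t - g s - (t - s) * g' s) with (D * (t - s) ^ 2) by (unfold D; field; lra).
  rewrite Rabs_mult, (Rabs_right ((t - s) ^ 2)) by lra. nra.
Qed.

Definition unit_sinusoid (g g' : R -> R) : Prop :=
  exists A B C, A ^ 2 + B ^ 2 <= 1 /\
    (forall x, g x = C + A * cos x + B * sin x) /\
    (forall x, g' x = B * cos x - A * sin x).

Lemma derivable_pt_lim_cos_sin_comb A B C x :
  derivable_pt_lim (fun y => C + A * cos y + B * sin y) x (B * cos x - A * sin x).
Proof. apply is_derive_Reals. auto_derive; [exact I | ring]. Qed.

Section UnitSinusoid.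

Variables g g' : R -> R.
Hypothesis Hg : unit_sinusoid g g'.

Lemma unit_sinusoid_lipschitz s t : Rabs (g t - g s) <= Rabs (t - s).
Proof.
  destruct Hg as (A & B & C & HAB & Eg & Eg').
  rewrite (Eg t), (Eg s), <- (Rmult_1_l (Rabs (t - s))).
  apply (lipschitz_of_derive_bound (fun y => C + A * cos y + B * sin y)
           (fun x => B * cos x - A * sin x)).
  - apply derivable_pt_lim_cos_sin_comb.
  - intro x. replace (B * cos x - A * sin x) with (B * cos x + (- A) * sin x) by ring.
    apply Rabs_cos_sin_comb_le_1. lra.
Qed.

Lemma unit_sinusoid_taylor s t : Rabs (g t - g s - (t - s) * g' s) <= (t - s) ^ 2 / 2.
Proof.
  destruct Hg as (A & B & C & HAB & Eg & Eg').
  rewrite (Eg t), (Eg s), Eg'.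
  rewrite <- (Rmult_1_l ((t - s) ^ 2)).
  apply (taylor1_remainder_le (fun y => C + A * cos y + B * sin y)
           (fun x => B * cos x - A * sin x) (fun x => - A * cos x + (- B) * sin x)).
  - apply derivable_pt_lim_cos_sin_comb.
  - intro x. apply is_derive_Reals. auto_derive; [exact I | ring].
  - intro x. apply Rabs_cos_sin_comb_le_1. lra.
Qed.

End UnitSinusoid.

Lemma Rmult_le_1 x y : 0 <= x <= 1 -> 0 <= y <= 1 -> x * y <= 1.
Proof. intros Hx Hy. nra. Qed.

Section Projection.

Variables (S : pt3) (u : pt2).
Hypothesis HS : px S ^ 2 + py S ^ 2 + pz S ^ 2 <= 1.
Hypothesis Hu : fst u ^ 2 + snd u ^ 2 <= 1.

Lemma Mmat_sinusoid_theta f :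
  unit_sinusoid (fun t => inner2 (Mmat t f S) u) (fun t => inner2 (Mtheta t f S) u).
Proof.
  exists (fst u * py S - snd u * cos f * px S), (- fst u * px S - snd u * cos f * py S),
    (snd u * sin f * pz S).
  split; [| split; intro; unfold inner2, Mmat, Mtheta; simpl; ring].
  replace (_ ^ 2 + _ ^ 2) with ((fst u ^ 2 + snd u ^ 2 * cos f ^ 2) * (px S ^ 2 + py S ^ 2))
    by ring.
  pose proof (sin2_cos2_pow f).
  apply Rmult_le_1; nra.
Qed.

Lemma Mmat_sinusoid_phi t :
  unit_sinusoid (fun f => inner2 (Mmat t f S) u) (fun f => inner2 (Mphi t f S) u).
Proof.
  exists (snd u * (- cos t * px S - sin t * py S)), (snd u * pz S),
    (fst u * (- sin t * px S + cos t * py S)).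
  split; [| split; intro; unfold inner2, Mmat, Mphi; simpl; ring].
  replace (_ ^ 2 + _ ^ 2) with (snd u ^ 2 * ((cos t * px S + sin t * py S) ^ 2 + pz S ^ 2))
    by ring.
  assert (E : (cos t * px S + sin t * py S) ^ 2 + (sin t * px S - cos t * py S) ^ 2
              = (sin t ^ 2 + cos t ^ 2) * (px S ^ 2 + py S ^ 2)) by ring.
  rewrite sin2_cos2_pow, Rmult_1_l in E.
  pose proof (pow2_ge_0 (sin t * px S - cos t * py S)).
  pose proof (pow2_ge_0 (cos t * px S + sin t * py S)).
  apply Rmult_le_1; nra.
Qed.

Lemma Mphi_lipschitz_theta f t t' :
  Rabs (inner2 (Mphi t' f S) u - inner2 (Mphi t f S) u) <= Rabs (t' - t).
Proof.
  apply (unit_sinusoid_lipschitz (fun t => inner2 (Mphi t f S) u)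
           (fun t => snd u * sin f * (py S * cos t - px S * sin t))).
  exists (snd u * sin f * px S), (snd u * sin f * py S), (snd u * cos f * pz S).
  split; [| split; intro; unfold inner2, Mphi; simpl; ring].
  replace (_ ^ 2 + _ ^ 2) with (snd u ^ 2 * sin f ^ 2 * (px S ^ 2 + py S ^ 2)) by ring.
  pose proof (sin2_cos2_pow f).
  apply Rmult_le_1; nra.
Qed.

Lemma Mmat_lipschitz t f tb fb :
  Rabs (inner2 (Mmat t f S) u - inner2 (Mmat tb fb S) u) <= Rabs (t - tb) + Rabs (f - fb).
Proof.
  pose proof (unit_sinusoid_lipschitz _ _ (Mmat_sinusoid_theta fb) tb t).
  pose proof (unit_sinusoid_lipschitz _ _ (Mmat_sinusoid_phi t) fb f).
  cbv beta in *.
  eapply Rle_trans; [| apply Rplus_le_compat; eassumption].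
  eapply Rle_trans; [| apply Rabs_triang]. right. f_equal. ring.
Qed.

Lemma Mmat_taylor t f tb fb e : Rabs (t - tb) <= e -> Rabs (f - fb) <= e ->
  Rabs (inner2 (Mmat t f S) u - inner2 (Mmat tb fb S) u
        - (t - tb) * inner2 (Mtheta tb fb S) u - (f - fb) * inner2 (Mphi tb fb S) u)
  <= 2 * e ^ 2.
Proof.
  intros Ht Hf.
  pose proof (unit_sinusoid_taylor _ _ (Mmat_sinusoid_theta fb) tb t) as Rt.
  pose proof (unit_sinusoid_taylor _ _ (Mmat_sinusoid_phi t) fb f) as Rf.
  pose proof (Rmult_between _ _ _ _ Hf
                (Rle_trans _ _ _ (Mphi_lipschitz_theta fb tb t) Ht)) as Rc.
  pose proof (pow2_le_of_Rabs_le _ _ Ht). pose proof (pow2_le_of_Rabs_le _ _ Hf).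
  cbv beta in Rt, Rf. apply Rabs_le_between' in Rt, Rf.
  apply Rabs_le_between. lra.
Qed.

End Projection.

Lemma inner2_Rot_l a x w : inner2 (Rot a x) w = inner2 x (Rot (- a) w).
Proof. unfold inner2, Rot; simpl. rewrite cos_neg, sin_neg. ring. Qed.

Lemma inner2_Rot'_l a x w : inner2 (Rot' a x) w = inner2 x (Rot (- (a + PI / 2)) w).
Proof.
  unfold inner2, Rot, Rot'; simpl.
  rewrite cos_neg, sin_neg, cos_plus, sin_plus, cos_PI2, sin_PI2. ring.
Qed.

Lemma Rot_sq_norm a w : fst (Rot a w) ^ 2 + snd (Rot a w) ^ 2 = fst w ^ 2 + snd w ^ 2.
Proof.
  unfold Rot; cbn [fst snd].
  replace (fst w ^ 2 + snd w ^ 2) with ((sin a ^ 2 + cos a ^ 2) * (fst w ^ 2 + snd w ^ 2))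
    by (rewrite sin2_cos2_pow; ring).
  ring.
Qed.

Lemma Mmat_sq_norm_le t f S :
  fst (Mmat t f S) ^ 2 + snd (Mmat t f S) ^ 2 <= px S ^ 2 + py S ^ 2 + pz S ^ 2.
Proof.
  unfold Mmat; cbn [fst snd].
  set (q := cos t * px S + sin t * py S).
  (* complete the two rows of [M] to an orthonormal frame *)
  assert (E1 : (- cos t * cos f * px S - sin t * cos f * py S + sin f * pz S) ^ 2
               + (sin f * q + cos f * pz S) ^ 2 = (sin f ^ 2 + cos f ^ 2) * (q ^ 2 + pz S ^ 2))
    by (unfold q; ring).
  assert (E2 : (- sin t * px S + cos t * py S + 0 * pz S) ^ 2 + q ^ 2
               = (sin t ^ 2 + cos t ^ 2) * (px S ^ 2 + py S ^ 2)) by (unfold q; ring).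
  rewrite sin2_cos2_pow in E1, E2. pose proof (pow2_ge_0 (sin f * q + cos f * pz S)). lra.
Qed.

Lemma Rot_sinusoid x w : fst x ^ 2 + snd x ^ 2 <= 1 -> fst w ^ 2 + snd w ^ 2 <= 1 ->
  unit_sinusoid (fun a => inner2 (Rot a x) w) (fun a => inner2 (Rot' a x) w).
Proof.
  intros Hx Hw.
  exists (fst x * fst w + snd x * snd w), (fst x * snd w - snd x * fst w), 0.
  split; [| split; intro; unfold inner2, Rot, Rot'; simpl; ring].
  replace (_ ^ 2 + _ ^ 2) with ((fst x ^ 2 + snd x ^ 2) * (fst w ^ 2 + snd w ^ 2)) by ring.
  apply Rmult_le_1; nra.
Qed.

Lemma Mmat_upper_bound P w t f tb fb e :
  px P ^ 2 + py P ^ 2 + pz P ^ 2 <= 1 -> fst w ^ 2 + snd w ^ 2 <= 1 ->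
  Rabs (t - tb) <= e -> Rabs (f - fb) <= e ->
  inner2 (Mmat t f P) w
  <= inner2 (Mmat tb fb P) w
     + e * (Rabs (inner2 (Mtheta tb fb P) w) + Rabs (inner2 (Mphi tb fb P) w)) + 2 * e ^ 2.
Proof.
  intros HP Hw Ht Hf.
  pose proof (Mmat_taylor P w HP Hw t f tb fb e Ht Hf) as T. apply Rabs_le_between in T.
  pose proof (Rmult_between _ _ _ _ Ht (Rle_refl (Rabs (inner2 (Mtheta tb fb P) w)))).
  pose proof (Rmult_between _ _ _ _ Hf (Rle_refl (Rabs (inner2 (Mphi tb fb P) w)))).
  lra.
Qed.

Lemma Rot_Mmat_lower_bound S w t f a tb fb ab e :
  px S ^ 2 + py S ^ 2 + pz S ^ 2 <= 1 -> fst w ^ 2 + snd w ^ 2 <= 1 ->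
  Rabs (t - tb) <= e -> Rabs (f - fb) <= e -> Rabs (a - ab) <= e ->
  inner2 (Rot ab (Mmat tb fb S)) w
  - e * (Rabs (inner2 (Rot' ab (Mmat tb fb S)) w)
         + Rabs (inner2 (Rot ab (Mtheta tb fb S)) w)
         + Rabs (inner2 (Rot ab (Mphi tb fb S)) w))
  - 9 / 2 * e ^ 2
  <= inner2 (Rot a (Mmat t f S)) w.
Proof.
  intros HS Hw Ht Hf Ha.
  pose proof (Mmat_sq_norm_le t f S) as Hx.
  pose proof (unit_sinusoid_taylor _ _ (Rot_sinusoid (Mmat t f S) w ltac:(lra) Hw) ab a) as Ta.
  cbv beta in Ta. apply Rabs_le_between in Ta.
  (* the value and the [alpha]-derivative at [ab] are projections of [M S] on rotated copies of [w] *)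
  rewrite (inner2_Rot_l ab), inner2_Rot'_l in Ta.
  rewrite (inner2_Rot_l ab (Mmat tb fb S)), (inner2_Rot_l ab (Mtheta tb fb S)),
    (inner2_Rot_l ab (Mphi tb fb S)), inner2_Rot'_l.
  set (u := Rot (- ab) w) in *. set (v := Rot (- (ab + PI / 2)) w) in *.
  assert (Hu : fst u ^ 2 + snd u ^ 2 <= 1) by (unfold u; rewrite Rot_sq_norm; lra).
  assert (Hv : fst v ^ 2 + snd v ^ 2 <= 1) by (unfold v; rewrite Rot_sq_norm; lra).
  pose proof (Mmat_taylor S u HS Hu t f tb fb e Ht Hf) as Tm. apply Rabs_le_between in Tm.
  pose proof (Mmat_lipschitz S v HS Hv t f tb fb) as Lv.
  pose proof (Rmult_between (a - ab) (inner2 (Mmat t f S) v - inner2 (Mmat tb fb S) v) _ (2 * e)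
                Ha ltac:(lra)).
  pose proof (Rmult_between _ _ _ _ Ha (Rle_refl (Rabs (inner2 (Mmat tb fb S) v)))).
  pose proof (Rmult_between _ _ _ _ Ht (Rle_refl (Rabs (inner2 (Mtheta tb fb S) u)))).
  pose proof (Rmult_between _ _ _ _ Hf (Rle_refl (Rabs (inner2 (Mphi tb fb S) u)))).
  pose proof (pow2_le_of_Rabs_le _ _ Ha).
  lra.
Qed.

Lemma inner2_wsum2_le w c ws Ls :
  length ws = length Ls -> Forall (fun a => 0 <= a) ws ->
  (forall p, In p Ls -> inner2 p w <= c) ->
  inner2 (wsum2 ws Ls) w <= fold_right Rplus 0 ws * c.
Proof.
  revert ws. induction Ls as [| p Ls IH]; intros [| a ws] Hl Hpos Hc; try discriminate.
  - unfold inner2; simpl. lra.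
  - inversion Hpos as [| ? ? Ha Hws]; subst.
    pose proof (IH ws ltac:(simpl in Hl; lia) Hws (fun q Hq => Hc q (or_intror Hq))).
    pose proof (Rmult_le_compat_l a _ _ Ha (Hc p (or_introl eq_refl))).
    unfold inner2 in *; simpl in *. nra.
Qed.

Lemma inner2_wsum2_lt w c ws Ls :
  length ws = length Ls -> Forall (fun a => 0 <= a) ws ->
  (forall p, In p Ls -> inner2 p w < c) -> 0 < fold_right Rplus 0 ws ->
  inner2 (wsum2 ws Ls) w < fold_right Rplus 0 ws * c.
Proof.
  revert ws. induction Ls as [| p Ls IH]; intros [| a ws] Hl Hpos Hc Hsum; try discriminate.
  - simpl in Hsum. lra.
  - inversion Hpos as [| ? ? Ha Hws]; subst. simpl in Hl, Hsum.
    assert (Hc' : forall q, In q Ls -> inner2 q w < c) by (intros q Hq; apply Hc; now right).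
    pose proof (inner2_wsum2_le w c ws Ls ltac:(lia) Hws (fun q Hq => Rlt_le _ _ (Hc' q Hq))).
    replace (inner2 (wsum2 (a :: ws) (p :: Ls)) w) with (a * inner2 p w + inner2 (wsum2 ws Ls) w)
      by (unfold inner2; simpl; ring).
    destruct (Rle_lt_or_eq_dec 0 a Ha) as [Ha' | <-].
    + pose proof (Rmult_lt_compat_l a _ _ Ha' (Hc p (or_introl eq_refl))). simpl. nra.
    + pose proof (IH ws ltac:(lia) Hws Hc' ltac:(lra)). simpl. lra.
Qed.

Lemma in_conv2_inner2_lt Ls x w c :
  in_conv2 Ls x -> (forall p, In p Ls -> inner2 p w < c) -> inner2 x w < c.
Proof.
  intros (ws & Hl & Hpos & Hsum & ->) Hc.
  rewrite <- (Rmult_1_l c), <- Hsum.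
  apply inner2_wsum2_lt; auto. lra.
Qed.

Lemma in_int_conv2_in_conv2 Ls x : in_int_conv2 Ls x -> in_conv2 Ls x.
Proof.
  intros (r & Hr & Hball). apply Hball.
  unfold dist2, norm2. replace (_ ^ 2 + _ ^ 2) with 0 by (simpl; ring). rewrite sqrt_0. lra.
Qed.

Lemma norm2_eq_1 w : norm2 w = 1 -> fst w ^ 2 + snd w ^ 2 = 1.
Proof.
  intro Hw. apply sqrt_inj; [nra | lra |]. now rewrite sqrt_1.
Qed.

Lemma norm3_le_1 P : norm3 P <= 1 -> px P ^ 2 + py P ^ 2 + pz P ^ 2 <= 1.
Proof.
  intro HP. apply sqrt_le_0; [nra | lra |]. now rewrite sqrt_1.
Qed.

Theorem theorem4p1 :
  forall (L : list pt3), polyhedron L -> pointsymmetric L -> radius_one L ->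
  forall (S : pt3), In S L ->
  forall (tb1 fb1 tb2 fb2 ab eps : R), 0 < eps ->
  forall (w : pt2), norm2 w = 1 ->
  let G := inner2 (Rot ab (Mmat tb1 fb1 S)) w
           - eps * (Rabs (inner2 (Rot' ab (Mmat tb1 fb1 S)) w)
                    + Rabs (inner2 (Rot ab (Mtheta tb1 fb1 S)) w)
                    + Rabs (inner2 (Rot ab (Mphi tb1 fb1 S)) w))
           - 9 / 2 * eps ^ 2 in
  let H := fun P : pt3 =>
           inner2 (Mmat tb2 fb2 P) w
           + eps * (Rabs (inner2 (Mtheta tb2 fb2 P) w)
                    + Rabs (inner2 (Mphi tb2 fb2 P) w))
           + 2 * eps ^ 2 in
  (forall P, In P L -> G > H P) ->
  ~ (exists t1 f1 t2 f2 a : R,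
       Rabs (t1 - tb1) <= eps /\ Rabs (f1 - fb1) <= eps /\
       Rabs (t2 - tb2) <= eps /\ Rabs (f2 - fb2) <= eps /\
       Rabs (a - ab) <= eps /\
       forall P, In P L ->
         in_int_conv2 (map (Mmat t2 f2) L) (Rot a (Mmat t1 f1 P))).
Proof.
  intros L _ _ [Hrad _] S HS tb1 fb1 tb2 fb2 ab eps _ w Hw G H HGH
    (t1 & f1 & t2 & f2 & a & Ht1 & Hf1 & Ht2 & Hf2 & Ha & Hin).
  apply norm2_eq_1 in Hw.
  assert (HL : forall P, In P L -> px P ^ 2 + py P ^ 2 + pz P ^ 2 <= 1)
    by (intros P HP; apply norm3_le_1, Hrad, HP).
  assert (Hlow : G <= inner2 (Rot a (Mmat t1 f1 S)) w)
    by (apply Rot_Mmat_lower_bound; auto; lra).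
  assert (Hhigh : inner2 (Rot a (Mmat t1 f1 S)) w < G).
  { apply (in_conv2_inner2_lt (map (Mmat t2 f2) L)); [now apply in_int_conv2_in_conv2, Hin |].
    intros p (P & <- & HP)%in_map_iff.
    pose proof (HGH P HP).
    pose proof (Mmat_upper_bound P w t2 f2 tb2 fb2 eps (HL P HP) ltac:(lra) Ht2 Hf2).
    unfold H in *. lra. }
  lra.
Qed.
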